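(* Let $M=A+\Delta-\sigma vv^{\mathsf T}$ be a generalized modularity matrix and let $S_1,\dots,S_k$ ($k\ge1$) be pairwise disjoint subsets of $V$ such that, for every $i=1,\dots,k$, $$e_{\mathrm{in}}(S_i)+\mathbb{1}_{S_i}^{\mathsf T}\Delta\mathbb{1}_{S_i}\ >\ \sum_{j\ne i}\mathbb{1}_{S_i}^{\mathsf T}A\mathbb{1}_{S_j}.$$ Then $M$ has at least $k-1$ positive eigenvalues (counted with multiplicity).
   Context: Let $V=\{1,\dots,n\}$ and let $A=(a_{ij})\in\mathbb{R}^{n\times n}$ be the adjacency matrix of an undirected connected weighted graph on $V$, possibly with loops, i.e. $A$ is symmetric, entrywise nonnegative and irreducible. A generalized modularity matrix is any matrix $M=A+\Delta-\sigma vv^{\mathsf T}$ where $\Delta$ is a real diagonal matrix, $v\ne0$ is entrywise nonnegative, and $\sigma>0$. For $S\subseteq V$, $\mathbb{1}_S$ is its characteristic vector and $e_{\mathrm{in}}(S)=\mathbb{1}_S^{\mathsf T}A\mathbb{1}_S=\sum_{i,j\in S}a_{ij}$ is the total internal edge weight (including loops). *)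

(* Real numbers are modelled by an arbitrary real closed field
   R : rcfType (the characteristic polynomial of a real symmetric matrix splits
   over R, so eigenvalues live in R). *)
From HB Require Import structures.
From mathcomp Require Import all_boot all_order all_algebra.
Set Implicit Arguments. Unset Strict Implicit. Unset Printing Implicit Defensive.
Import Order.TTheory GRing.Theory Num.Theory.
Local Open Scope ring_scope.

Definition chi {R : nzRingType} {n : nat} (S : {set 'I_n}) : 'cV[R]_n :=
  \col_i (i \in S)%:R.

Definition bilf {R : nzRingType} {n : nat} (x : 'cV[R]_n) (B : 'M[R]_n) (y : 'cV[R]_n) : R :=
  (x^T *m B *m y) 0 0.

(* A is the adjacency matrix of an undirected connected weighted graph
   (loops allowed): symmetric, entrywise nonnegative, irreducible.
   Irreducibility of a symmetric nonnegative matrix = connectedness of its graph: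
   no nonempty proper vertex subset is disconnected from its complement. *)
Definition irreducible_mx (R : numDomainType) (n : nat) (A : 'M[R]_n) : Prop :=
  forall S : {set 'I_n}, S != set0 -> S != setT ->
    exists i j, [/\ i \in S, j \notin S & A i j != 0].

Definition adjacency_mx (R : numDomainType) (n : nat) (A : 'M[R]_n) : Prop :=
  [/\ A^T = A, (forall i j, 0 <= A i j) & irreducible_mx A].

(* M has at least m positive eigenvalues counted with multiplicity:
   there are m positive numbers (with repetition) whose product of linear
   factors divides the characteristic polynomial of M. *)
Definition at_least_pos_eigs (R : realFieldType) (n : nat) (M : 'M[R]_n) (m : nat) : Prop :=
  exists s : seq R, [/\ size s = m, all (fun x => 0 < x) s &
    (\prod_(x <- s) ('X - x%:P)) %| char_poly M].

From HB Require Import structures.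
From mathcomp Require Import all_boot all_order all_algebra.
From mathcomp Require Import ring complex sesquilinear spectral.
Set Implicit Arguments. Unset Strict Implicit. Unset Printing Implicit Defensive.
Import Order.TTheory GRing.Theory Num.Theory.
Local Open Scope ring_scope.
Local Open Scope sesquilinear_scope.

(* Let X be the k x n matrix whose rows are the characteristic vectors of the
   S_i, and B := X (A + Delta) X^T.  On the hyperplane {c | c X v = 0}, of
   dimension at least k - 1, the form c |-> (cX) M (cX)^T agrees with c B c^T:
   the rank-one term vanishes there.
   The hypothesis says that the symmetric matrix B, whose off-diagonal entries
   are nonnegative edge weights, is strictly diagonally dominant, so this form
   is positive definite.  Hence M is positive definite on a (k - 1)-dimensional
   space, which by the Courant-Fischer argument forces k - 1 positive
   eigenvalues.  The spectral theorem is only available over algebraically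
   closed fields, so we diagonalize M in R[i]. *)

Section DominantForm.
Variables (C : numClosedFieldType) (k : nat) (B : 'M[C]_k).
Hypotheses (Bsym : B^T = B) (B_offdiag_ge0 : forall i j, i != j -> 0 <= B i j).

Lemma offdiag_form_ge0 (c : 'rV[C]_k) :
  0 <= \sum_i \sum_(j | j != i) B i j * (c 0 i * (c 0 i)^* + c 0 i * (c 0 j)^*).
Proof.
pose F i j := B i j * (c 0 i * (c 0 i)^* + c 0 i * (c 0 j)^*).
rewrite -/F; set S := \sum_i _.
have BC i j : B j i = B i j by rewrite -{1}Bsym mxE.
have S_swap : S = \sum_i \sum_(j | j != i) F j i.
  rewrite /S; under eq_bigr => i _ do rewrite big_mkcond /=.
  rewrite exchange_big; apply: eq_bigr => i _; rewrite [RHS]big_mkcond.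
  by apply: eq_bigr => j _; rewrite eq_sym.
(* Symmetrizing turns each pair of terms into B i j |c i + c j|^2. *)
rewrite -(pmulrn_lge0 _ (isT : (0 < 2)%N)) mulr2n {1}S_swap /S -big_split /=.
apply: sumr_ge0 => i _; rewrite -big_split /=; apply: sumr_ge0 => j ji.
have -> : F j i + F i j = B i j * ((c 0 i + c 0 j) * (c 0 i + c 0 j)^*).
  by rewrite /F BC rmorphD /=; ring.
by apply: mulr_ge0; [rewrite B_offdiag_ge0 // eq_sym | exact: mul_conjC_ge0].
Qed.

Lemma diag_dominant_form_gt0 (c : 'rV[C]_k) :
  (forall i, \sum_(j | j != i) B i j < B i i) -> c != 0 ->
  0 < (c *m B *m c^t*) 0 0.
Proof.
move=> Bdom cN0; pose nc i := c 0 i * (c 0 i)^*.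
have -> : (c *m B *m c^t*) 0 0 = \sum_i (B i i - \sum_(j | j != i) B i j) * nc i
    + \sum_i \sum_(j | j != i) B i j * (nc i + c 0 i * (c 0 j)^*).
  rewrite mxE; under eq_bigr => j _ do rewrite !mxE big_distrl /=.
  rewrite exchange_big -big_split /=; apply: eq_bigr => i _.
  rewrite (bigD1 i) //=; under [X in _ = _ + X]eq_bigr => j _ do rewrite mulrDr.
  rewrite big_split /= -big_distrl /=.
  rewrite [X in _ + X = _](eq_bigr (fun j => B i j * (c 0 i * (c 0 j)^*))).
    by rewrite /nc; ring.
  by move=> j _; ring.
apply: ltr_wpDr; first exact: offdiag_form_ge0.
have [i0 ci0] : exists i, c 0 i != 0.
  by have /matrix0Pn [i [j cij]] := cN0; exists j; rewrite (ord1 i) in cij.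
rewrite (bigD1 i0) //=; apply: ltr_wpDr.
  apply: sumr_ge0 => i _; apply: mulr_ge0; last exact: mul_conjC_ge0.
  by rewrite subr_ge0 ltW.
apply: mulr_gt0; first by rewrite subr_gt0.
by rewrite lt_def mul_conjC_ge0 andbT mulf_neq0 // conjC_eq0.
Qed.

End DominantForm.

Lemma char_poly_similar (F : fieldType) n (P D : 'M[F]_n) : P \in unitmx ->
  char_poly (invmx P *m D *m P) = char_poly D.
Proof.
move=> Pu; rewrite /char_poly /char_poly_mx.
set Pi := map_mx polyC (invmx P); set Pp := map_mx polyC P.
have PiP : Pi *m Pp = 1%:M by rewrite -map_mxM mulVmx // map_mx1.
have -> : 'X%:M - map_mx polyC (invmx P *m D *m P) =
          Pi *m ('X%:M - map_mx polyC D) *m Pp.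
  rewrite mulmxBr mulmxBl !map_mxM mul_mx_scalar.
  by rewrite -scalemxAl PiP scalemx1.
rewrite !det_mulmx mulrC mulrA -det_mulmx mulmxE.
have -> : Pp * Pi = 1 by rewrite -mulmxE -map_mxM mulmxV // map_mx1.
by rewrite det1 mul1r.
Qed.

Section PositiveEigenvalues.
Variables (C : numClosedFieldType) (n : nat) (H : 'M[C]_n).
Hypothesis Hherm : H \is hermsymmx.

Definition pos_eigs : {set 'I_n} := [set i | 0 < spectral_diag H 0 i].

Lemma char_poly_hermitian :
  char_poly H = \prod_i ('X - (spectral_diag H 0 i)%:P).
Proof.
have /orthomx_spectralP {1}-> := hermitian_normalmx Hherm.
rewrite char_poly_similar ?spectral_unit // char_poly_trig ?diag_mx_is_trig //.
by apply: eq_bigr => i _; rewrite mxE eqxx mulr1n.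
Qed.

Lemma hermitian_form_le0 (x : 'rV[C]_n) :
  (forall i, i \in pos_eigs -> (x *m (spectralmx H)^t*) 0 i = 0) ->
  (x *m H *m x^t*) 0 0 <= 0.
Proof.
set P := spectralmx H; set w := x *m P^t* => w0.
have wt : w^t* = P *m x^t* by rewrite /w trmx_mul map_mxM trmxCK.
have /orthomx_spectralP -> := hermitian_normalmx Hherm.
rewrite invmx_unitary ?spectral_unitarymx // -/P !mulmxA -/w -mulmxA -wt.
have /mxOverP Dreal := hermitian_spectral_diag_real Hherm.
clearbody w; rewrite mxE; apply: sumr_le0 => i _; rewrite mul_mx_diag !mxE.
case: (boolP (i \in pos_eigs)) => [/w0 -> | Ni]; first by rewrite !mul0r.
have Dle0 : spectral_diag H 0 i <= 0.
  by rewrite real_leNgt ?Dreal ?real0 //; rewrite inE in Ni.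
by rewrite mulrAC; apply: mulr_ge0_le0 => //; exact: mul_conjC_ge0.
Qed.

(* Courant-Fischer: a subspace of dimension k - p on which the form of H is
   positive definite meets the span of the nonpositive eigenvectors trivially. *)
Lemma card_pos_eigs_ge k p (Y : 'M[C]_(k, n)) (W : 'M[C]_(k, p)) :
  (forall c : 'rV_k, c != 0 -> c *m W = 0 ->
     0 < (c *m Y *m H *m (c *m Y)^t*) 0 0) ->
  (k <= p + #|pos_eigs|)%N.
Proof.
move=> Ypos; rewrite leqNgt; apply/negP => lt_k.
pose L := row_mx W (colsub (@enum_val _ (mem pos_eigs)) (Y *m (spectralmx H)^t*)).
have /rowV0Pn [c /sub_kermxP cL cN0] : kermx L != 0.
  rewrite kermx_eq0 /row_free; apply: contraTneq lt_k => <-.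
  by rewrite -leqNgt rank_leq_col.
move: cL; rewrite mul_mx_row => /eqP; rewrite row_mx_eq0 => /andP [/eqP cW /eqP cY].
suff /(lt_le_trans (Ypos c cN0 cW)) : (c *m Y *m H *m (c *m Y)^t*) 0 0 <= 0.
  by rewrite ltxx.
apply: hermitian_form_le0 => i Ii.
have /matrixP /(_ 0 (enum_rank_in Ii i)) := cY.
by rewrite mulmx_colsub mulmxA !mxE enum_rankK_in.
Qed.

End PositiveEigenvalues.

Section RealSymmetric.
Variable R : rcfType.
Local Notation toC := (real_complex R).

Lemma trmxC_real_complex m n (N : 'M[R]_(m, n)) : (map_mx toC N)^t* = map_mx toC N^T.
Proof. by apply/matrixP => i j; rewrite !mxE conj_Creal // complex_real. Qed.

Lemma sym_real_complex_hermsym n (M : 'M[R]_n) : M^T = M -> map_mx toC M \is hermsymmx.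
Proof.
move=> Msym; rewrite is_hermitianmxE expr0 scale1r.
by rewrite trmxC_real_complex Msym.
Qed.

Lemma at_least_pos_eigs_sym n (M : 'M[R]_n) m :
  M^T = M -> (m <= #|pos_eigs (map_mx toC M)|)%N -> at_least_pos_eigs M m.
Proof.
move=> /sym_real_complex_hermsym MCh le_m; set D := spectral_diag (map_mx toC M).
set IS := pos_eigs (map_mx toC M).
have /mxOverP Dreal := hermitian_spectral_diag_real MCh.
pose s := [seq complex.Re (D 0 i) | i <- enum IS].
exists (take m s); split.
- by rewrite size_takel // size_map -cardE.
- apply/allP => x xs; case/mapP: (mem_take xs) => i.
  by rewrite mem_enum inE ltcE => /andP [_ ?] ->.
apply: (@dvdp_trans _ (\prod_(x <- s) ('X - x%:P))).
  by rewrite -[in X in _ %| X](cat_take_drop m s) big_cat /= dvdp_mulIl.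
rewrite -(dvdp_map toC) map_char_poly char_poly_hermitian //.
rewrite map_prod_XsubC big_map big_enum /= [X in _ %| X](bigID (mem IS)) /=.
under eq_bigr => i _ do rewrite RRe_real ?Dreal //.
exact: dvdp_mulIl.
Qed.

Lemma form_rank_one_update k n (N : 'M[R]_(k, n)) (G : 'M[R]_n) (u : 'cV[R]_n) (a : R)
    (c : 'rV[R[i]]_k) :
  c *m map_mx toC (N *m u) = 0 ->
  c *m map_mx toC N *m map_mx toC (G - a *: (u *m u^T)) *m (c *m map_mx toC N)^t* =
  c *m map_mx toC (N *m G *m N^T) *m c^t*.
Proof.
move=> cNu0.
rewrite trmx_mul map_mxM trmxC_real_complex !mulmxA -(mulmxA c) -(mulmxA c) -!map_mxM.
have -> : N *m (G - a *: (u *m u^T)) *m N^T = N *m G *m N^T - a *: (N *m u *m (N *m u)^T).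
  by rewrite mulmxBr mulmxBl -scalemxAr -scalemxAl trmx_mul !mulmxA.
rewrite map_mxB mulmxBr mulmxBl map_mxZ -scalemxAr -scalemxAl.
by rewrite [map_mx _ (N *m u *m _)]map_mxM mulmxA cNu0 !mul0mx scaler0 subr0.
Qed.

End RealSymmetric.

Section ChiMx.
Variables (R : nzRingType) (k n : nat) (S : 'I_k -> {set 'I_n}).

Definition chi_mx : 'M[R]_(k, n) := \matrix_i (chi (S i))^T.

Lemma chi_mx_form (N : 'M[R]_n) i j :
  (chi_mx *m N *m chi_mx^T) i j = bilf (chi (S i)) N (chi (S j)).
Proof.
rewrite /bilf !mxE; apply: eq_bigr => b _; rewrite !mxE; congr (_ * _).
by apply: eq_bigr => a _; rewrite !mxE.
Qed.

End ChiMx.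
Arguments chi_mx {R k n} S.

Lemma bilfD (R : nzRingType) n (x y : 'cV[R]_n) (N1 N2 : 'M[R]_n) :
  bilf x (N1 + N2) y = bilf x N1 y + bilf x N2 y.
Proof. by rewrite /bilf mulmxDr mulmxDl mxE. Qed.

Lemma bilf_chi_diag_disjoint (R : nzRingType) n (d : 'rV[R]_n) (S T : {set 'I_n}) :
  [disjoint S & T] -> bilf (chi S) (diag_mx d) (chi T) = 0.
Proof.
move=> dis; rewrite /bilf mxE; apply: big1 => b _.
rewrite mxE (bigD1 b) //= big1 ?addr0; last first.
  by move=> a ab; rewrite !mxE (negbTE ab) mulr0n mulr0.
rewrite !mxE eqxx mulr1n.
case: (boolP (b \in S)) => bS; last by rewrite !mul0r.
by rewrite (disjointFr dis bS) mulr0.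
Qed.

Lemma bilf_chi_ge0 (R : numDomainType) n (A : 'M[R]_n) (S T : {set 'I_n}) :
  (forall a b, 0 <= A a b) -> 0 <= bilf (chi S) A (chi T).
Proof.
move=> Age0; rewrite /bilf mxE; apply: sumr_ge0 => b _; rewrite !mxE.
apply: mulr_ge0; last exact: ler0n.
by apply: sumr_ge0 => a _; rewrite !mxE; apply: mulr_ge0.
Qed.

Theorem mainTheorem12 (R : rcfType) (n k : nat)
  (A : 'M[R]_n) (d : 'rV[R]_n) (v : 'cV[R]_n) (sigma : R)
  (S : 'I_k -> {set 'I_n}) :
  adjacency_mx A ->
  v != 0 -> (forall i, 0 <= v i 0) -> 0 < sigma ->
  (0 < k)%N ->
  (forall i j, i != j -> [disjoint S i & S j]) ->
  (forall i, bilf (chi (S i)) A (chi (S i)) + bilf (chi (S i)) (diag_mx d) (chi (S i))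
             > \sum_(j < k | j != i) bilf (chi (S i)) A (chi (S j))) ->
  at_least_pos_eigs (A + diag_mx d - sigma *: (v *m v^T)) k.-1.
Proof.
move=> [Asym Age0 _] _ _ _ _ dis dom.
set M := _ - _; pose X : 'M[R]_(k, n) := chi_mx S.
pose B := X *m (A + diag_mx d) *m X^T.
have Msym : M^T = M.
  by rewrite linearB /= linearD /= tr_diag_mx Asym linearZ /= trmx_mul trmxK.
have Bsym : B^T = B by rewrite !trmx_mul trmxK linearD /= tr_diag_mx Asym mulmxA.
have B_offdiag i j : i != j -> B i j = bilf (chi (S i)) A (chi (S j)).
  by move=> ij; rewrite chi_mx_form bilfD bilf_chi_diag_disjoint ?addr0 ?dis.
apply: at_least_pos_eigs_sym => //.
suff : (k <= 1 + #|pos_eigs (map_mx (real_complex R) M)|)%N by case: (k).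
apply: (card_pos_eigs_ge (sym_real_complex_hermsym Msym)
          (Y := map_mx (real_complex R) X) (W := map_mx (real_complex R) (X *m v))).
move=> c cN0 cXv0.
rewrite /M form_rank_one_update //; apply: diag_dominant_form_gt0 => //.
- by rewrite map_trmx Bsym.
- by move=> i j ij; rewrite mxE B_offdiag // ler0c bilf_chi_ge0.
move=> i; rewrite mxE.
rewrite (eq_bigr (fun j => real_complex R (bilf (chi (S i)) A (chi (S j))))).
  by rewrite -rmorph_sum ltcR chi_mx_form bilfD.
by move=> j ji; rewrite mxE B_offdiag // eq_sym.
Qed.
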